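(* Let $X$ be a non-empty set, $\Lambda$ and $Y$ topological spaces, $y_0\in Y$. Let $\varphi\in\mathcal{G}$, $\Psi\in\mathcal{H}$ and $J\in\mathcal{M}$. Then, for each $\mu>\theta(\varphi,\Psi,J)$ and each filtering cover $\mathcal{N}$ of $X$, there exists $A\in\mathcal{N}$ such that $$\sup_{\lambda\in\Lambda}\inf_{x\in A}\big(J(x)-\mu\varphi(\Psi(x,\lambda))\big)<\inf_{x\in A}\sup_{z\in A}\big(J(x)-\mu\varphi(\Psi(x,\lambda_z))\big).$$
   Context: A family $\mathcal{N}$ of non-empty subsets of $X$ is a filtering cover of $X$ if $\bigcup_{A\in\mathcal{N}}A=X$ and for each $A_1,A_2\in\mathcal{N}$ there is $A_3\in\mathcal{N}$ with $A_1\cup A_2\subseteq A_3$. $\mathcal{G}$ is the family of all lower semicontinuous functions $\varphi:Y\to[0,+\infty[$ with $\varphi^{-1}(0)=\{y_0\}$ such that $\inf_{Y\setminus V}\varphi>0$ for each neighbourhood $V$ of $y_0$. $\mathcal{H}$ is the family of all functions $\Psi:X\times\Lambda\to Y$ such that, for each $x\in X$, $\Psi(x,\cdot)$ is continuous, injective, open, and takes the value $y_0$ at a point $\lambda_x$ (necessarily unique), and the function $x\mapsto\lambda_x$ is not constant. $\mathcal{M}$ is the family of all functions $J:X\to\mathbb{R}$ whose set $M_J$ of global minima is non-empty. For $\varphi\in\mathcal{G}$, $\Psi\in\mathcal{H}$, $J\in\mathcal{M}$, $$\theta(\varphi,\Psi,J)=\inf\left\{\frac{J(x)-J(u)}{\varphi(\Psi(x,\lambda_u))}:(u,x)\in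 M_J\times X,\ \lambda_x\neq\lambda_u\right\}.$$ *)

From HB Require Import structures.
From mathcomp Require Import all_boot all_order all_algebra.
From mathcomp Require Import all_classical all_reals all_analysis.
Set Implicit Arguments. Unset Strict Implicit. Unset Printing Implicit Defensive.
Import Order.TTheory GRing.Theory Num.Theory.
Local Open Scope classical_set_scope.
Local Open Scope ring_scope.

Definition filtering_cover {X : Type} (N : set (set X)) : Prop :=
  (forall A, N A -> A !=set0) /\
  \bigcup_(A in N) A = setT /\
  (forall A1 A2, N A1 -> N A2 -> exists2 A3, N A3 & A1 `|` A2 `<=` A3).

Definition open_map {S T : topologicalType} (f : S -> T) : Prop :=
  forall U : set S, open U -> open (f @` U).

Definition in_G {R : realType} {Y : topologicalType} (y0 : Y) (phi : Y -> R) : Prop :=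
  lower_semicontinuous (fun y => (phi y)%:E) /\
  (forall y, 0 <= phi y) /\
  phi @^-1` [set 0] = [set y0] /\
  (forall V, nbhs y0 V -> (0 < ereal_inf [set (phi y)%:E | y in ~` V])%E).

(* The class H; lam x is the (necessarily unique) point lambda_x with Psi x lam_x = y0. *)
Definition in_H {X : Type} {Lam Y : topologicalType} (y0 : Y)
    (Psi : X -> Lam -> Y) (lam : X -> Lam) : Prop :=
  (forall x, continuous (Psi x)) /\
  (forall x, injective (Psi x)) /\
  (forall x, open_map (Psi x)) /\
  (forall x, Psi x (lam x) = y0) /\
  (exists x1 x2, lam x1 <> lam x2).

Definition argminset {X : Type} {R : realType} (J : X -> R) : set X :=
  [set u | forall x, J u <= J x].

Definition in_M {X : Type} {R : realType} (J : X -> R) : Prop :=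
  argminset J !=set0.

Definition theta {X : Type} {Lam Y : topologicalType} {R : realType}
    (phi : Y -> R) (Psi : X -> Lam -> Y) (lam : X -> Lam) (J : X -> R) : \bar R :=
  ereal_inf [set ((J ux.2 - J ux.1) / phi (Psi ux.2 (lam ux.1)))%:E
            | ux in [set ux : X * X | argminset J ux.1 /\ lam ux.2 <> lam ux.1]].

From HB Require Import structures.
From mathcomp Require Import all_boot all_order all_algebra.
From mathcomp Require Import all_classical all_reals all_analysis.
From mathcomp Require Import lra.
Set Implicit Arguments. Unset Strict Implicit. Unset Printing Implicit Defensive.
Import Order.TTheory GRing.Theory Num.Theory.
Local Open Scope classical_set_scope.
Local Open Scope ring_scope.

(* Pick u in M_J and x with lambda_x <> lambda_u whose quotient in theta is
   below mu, i.e. J x - mu phi(Psi(x, lambda_u)) < J u.  By lower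
   semicontinuity this strict inequality, with a uniform margin, persists for
   lambda in a neighbourhood V of lambda_u; outside V, Psi(u, lambda) stays
   away from y0 because Psi(u, .) is open and injective, so phi(Psi(u, lambda))
   is bounded below by some eta > 0.  Hence on any A containing u and x the
   left-hand side is strictly below J u.  The right-hand side is at least J u,
   taking z = x in the inner supremum. *)

Lemma lower_semicontinuous_comp (S T : topologicalType) (R : numFieldType)
    (f : T -> \bar R) (g : S -> T) :
  lower_semicontinuous f -> continuous g -> lower_semicontinuous (f \o g).
Proof.
move=> lsc_f cont_g s a /lsc_f [V Vgs Vf].
by exists (g @^-1` V); [exact: cont_g | move=> t /Vf].
Qed.

Lemma open_map_nbhs (S T : topologicalType) (f : S -> T) (s : S) (W : set S) :
  open_map f -> nbhs s W -> nbhs (f s) (f @` W).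
Proof.
move=> fopen; rewrite nbhsE => -[B [Bopen Bs] BW].
apply: (filterS (image_subset f BW)); apply: open_nbhs_nbhs.
by split; [exact: fopen | exists s].
Qed.

Lemma filtering_cover_pair (X : Type) (N : set (set X)) (x y : X) :
  filtering_cover N -> exists2 A, N A & A x /\ A y.
Proof.
move=> [_ [Ncov Nfil]].
have [Ax NAx Axx] : (\bigcup_(A in N) A) x by rewrite Ncov.
have [Ay NAy Ayy] : (\bigcup_(A in N) A) y by rewrite Ncov.
have [A NA AxyA] := Nfil _ _ NAx NAy.
by exists A => //; split; apply: AxyA; [left | right].
Qed.

Section ereal_minimax.
Variable R : realType.
Local Open Scope ereal_scope.

Lemma ereal_sup_inf_le (I T : Type) (f : T -> I -> \bar R) (A : set T) (b : \bar R) :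
  (forall i, exists2 t, A t & f t i <= b) ->
  ereal_sup [set ereal_inf [set f t i | t in A] | i in [set: I]] <= b.
Proof.
move=> fb; apply: ge_ereal_sup => _ [i _ <-].
have [t At ftb] := fb i.
by apply: le_trans ftb; apply: ereal_inf_lbound; exists t.
Qed.

Lemma ereal_inf_sup_ge (T : Type) (f : T -> T -> \bar R) (A : set T) (b : \bar R) :
  (forall t, A t -> exists2 s, A s & b <= f t s) ->
  b <= ereal_inf [set ereal_sup [set f t s | s in A] | t in A].
Proof.
move=> fb; apply: le_ereal_inf_tmp => _ [t At <-].
have [s As bfs] := fb t At.
by apply: (le_trans bfs); apply: ereal_sup_ubound; exists s.
Qed.

End ereal_minimax.

Section class_G.
Variables (R : realType) (Y : topologicalType) (y0 : Y) (phi : Y -> R).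
Hypothesis phiG : in_G y0 phi.

Lemma in_G_eq0 y : phi y = 0 <-> y = y0.
Proof.
have [_ [_ [phi_pre _]]] := phiG.
split => [phiy0 | ->].
- by have : (phi @^-1` [set 0]) y by []; rewrite phi_pre.
- by have : [set y0] y0 by []; rewrite -phi_pre.
Qed.

Lemma in_G_gt0 y : y <> y0 -> 0 < phi y.
Proof.
have [_ [phi_ge0 _]] := phiG.
by move=> yy0; rewrite lt_neqAle phi_ge0 andbT eq_sym; apply/eqP => /in_G_eq0.
Qed.

Lemma in_G_bounded_away V :
  nbhs y0 V -> exists2 eta, 0 < eta & forall y, ~ V y -> eta <= phi y.
Proof.
have [_ [_ [_ phi_inf]]] := phiG.
move=> /phi_inf; set S := [set _ | _ in _].
have Slb y : ~ V y -> (ereal_inf S <= (phi y)%:E)%E.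
  by move=> Vy; apply: ereal_inf_lbound; exists y.
case: (ereal_inf S) Slb => [r | | ] // Slb r_gt0.
- by exists r => // y /Slb; rewrite lee_fin.
- by exists 1 => // y /Slb.
Qed.

End class_G.

Section class_H.
Variables (R : realType) (X : Type) (Lam Y : topologicalType) (y0 : Y).
Variables (phi : Y -> R) (Psi : X -> Lam -> Y) (lam : X -> Lam).
Hypotheses (phiG : in_G y0 phi) (PsiH : in_H y0 Psi lam).

Lemma in_GH_gt0 x x' : lam x' <> lam x -> 0 < phi (Psi x' (lam x)).
Proof.
have [_ [Psi_inj [_ [Psi_lam _]]]] := PsiH.
move=> lam_neq; apply: (in_G_gt0 phiG) => Psiy0.
by apply: lam_neq; apply: (Psi_inj x'); rewrite Psi_lam.
Qed.

Lemma in_GH_bounded_off x W : nbhs (lam x) W ->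
  exists2 eta, 0 < eta & forall l, ~ W l -> eta <= phi (Psi x l).
Proof.
have [_ [Psi_inj [Psi_open [Psi_lam _]]]] := PsiH.
move=> /(open_map_nbhs (Psi_open x)); rewrite Psi_lam.
move=> /(in_G_bounded_away phiG) [eta eta_gt0 eta_le].
exists eta => // l Wl; apply: eta_le => -[l' Wl' /Psi_inj l'l].
by apply: Wl; rewrite -l'l.
Qed.

End class_H.

Lemma theta_lt_witness (R : realType) (X : Type) (Lam Y : topologicalType) (y0 : Y)
    (phi : Y -> R) (Psi : X -> Lam -> Y) (lam : X -> Lam) (J : X -> R) (mu : R) :
  in_G y0 phi -> in_H y0 Psi lam -> (theta phi Psi lam J < mu%:E)%E ->
  exists u x, [/\ argminset J u, 0 < mu & (J x - J u) / mu < phi (Psi x (lam u))].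
Proof.
move=> phiG PsiH /ereal_inf_lt [_ [[u x] [/= Mu lam_xu] <-]].
rewrite lte_fin => q_lt_mu.
have d_gt0 := in_GH_gt0 phiG PsiH lam_xu.
have mu_gt0 : 0 < mu.
  by apply: le_lt_trans q_lt_mu; rewrite divr_ge0 ?subr_ge0 ?Mu // ltW.
exists u, x; split => //.
by rewrite ltr_pdivrMr // mulrC -ltr_pdivrMr.
Qed.

Theorem theorem3p1 (R : realType) (X : Type) (Lam Y : topologicalType) (y0 : Y)
    (phi : Y -> R) (Psi : X -> Lam -> Y) (lam : X -> Lam) (J : X -> R) :
  [set: X] !=set0 ->
  in_G y0 phi -> in_H y0 Psi lam -> in_M J ->
  forall (mu : R), (theta phi Psi lam J < mu%:E)%E ->
  forall N : set (set X), filtering_cover N ->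
  exists2 A, N A &
    (ereal_sup [set ereal_inf [set (J x - mu * phi (Psi x l))%:E | x in A] | l in [set: Lam]]
     < ereal_inf [set ereal_sup [set (J x - mu * phi (Psi x (lam z)))%:E | z in A]
                  | x in A])%E.
Proof.
(* X and M_J are nonempty as soon as theta < mu. *)
move=> _ phiG PsiH _ mu /(theta_lt_witness phiG PsiH) [u [x [Mu mu_gt0 q_lt]]] N.
move=> /(filtering_cover_pair u x) [A NA [Au Ax]]; exists A => //.
have [q_lt_a a_lt] := midf_lt q_lt.
set a := (_ / 2) in q_lt_a a_lt.
have Jx_lt : J x - mu * a < J u by move: q_lt_a; rewrite ltr_pdivrMr //; lra.
have [V Vnbhs Va] := lower_semicontinuous_comp phiG.1 (PsiH.1 x) a_lt.
have [eta eta_gt0 eta_le] := in_GH_bounded_off phiG PsiH Vnbhs.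
apply: (@le_lt_trans _ _ (Num.max (J x - mu * a) (J u - mu * eta))%:E).
  apply: ereal_sup_inf_le => l; have [Vl | nVl] := pselect (V l).
  - exists x => //; rewrite lee_fin le_max lerD2l lerN2 ler_pM2l //.
    by have := Va l Vl; rewrite lte_fin /= => /ltW ->.
  - exists u => //; rewrite lee_fin le_max lerD2l lerN2 ler_pM2l //.
    by rewrite eta_le // orbT.
apply: (@lt_le_trans _ _ (J u)%:E).
  by rewrite lte_fin gt_max Jx_lt /= gtrDl oppr_lt0 mulr_gt0.
apply: ereal_inf_sup_ge => t At; exists t => //.
by rewrite PsiH.2.2.2.1 (proj2 (in_G_eq0 phiG y0)) // mulr0 subr0 lee_fin Mu.
Qed.
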